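(* If a set of desirable option sets $K\subseteq\mathscr{Q}$ is coherent, then the choice function $C_K$ is coherent.
   Context: Let $\mathcal{X}$ be a nonempty set and let $\mathscr{V}$ be the real vector space of all functions $u:\mathcal{X}\to\mathbb{R}$ (options), with pointwise operations. For $u,v\in\mathscr{V}$, $u\le v$ iff $u(x)\le v(x)$ for all $x\in\mathcal{X}$, and $u<v$ iff $u\le v$ and $u\neq v$. Let $\mathscr{V}_{>0}=\{u\in\mathscr{V}:0<u\}$ and $\mathscr{V}^s_{>0}=\{\{u\}:u\in\mathscr{V}_{>0}\}$. Let $\mathscr{Q}$ be the set of all finite subsets of $\mathscr{V}$ (including $\emptyset$). For $A\in\mathscr{Q}$ and $u\in\mathscr{V}$, $A-u=\{v-u:v\in A\}$. For a positive integer $n$, $\mathbb{R}^{n,+}=\{\boldsymbol\lambda\in\mathbb{R}^n:\lambda_j\ge0\ \forall j,\ \sum_j\lambda_j>0\}$, and for $\boldsymbol\lambda\in\mathbb{R}^n$, $\mathbf u=(u_1,\dots,u_n)\in\mathscr{V}^n$, $\boldsymbol\lambda\mathbf u=\sum_{j=1}^n\lambda_ju_j$. A choice function is a map $C:\mathscr{Q}\to\mathscr{Q}$ with $C(A)\subseteq A$ for all $A$; its rejection function is $R_C(A)=A\setminus C(A)$, and $K_C=\{A\in\mathscr{Q}:0\notin C(A\cup\{0\})\}$. $C$ is coherent if: (C0) $C(A)\neq\emptyset$ for all nonempty $A\in\mathscr{Q}$; (C1) for all $A\in\mathscr{Q}$ and $u\in A$: $u\in C(A)\iff 0\in C(A-u)$;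 (C2) $\{u\}\in K_C$ for all $u\in\mathscr{V}_{>0}$; (C3) for all $A,B\in K_C$ and all maps $\boldsymbol\lambda:A\times B\to\mathbb{R}^{2,+}$, $\{\boldsymbol\lambda(\mathbf u)\mathbf u:\mathbf u\in A\times B\}\in K_C$; (C4) $A\subseteq B\Rightarrow R_C(A)\subseteq R_C(B)$ for all $A,B\in\mathscr{Q}$. A set of desirable option sets is any $K\subseteq\mathscr{Q}$. It is coherent if for all $A,B\in K$: (K0) $A\setminus\{0\}\in K$; (K1) $\{0\}\notin K$; (K2) $\mathscr{V}^s_{>0}\subseteq K$; (K3) $\{\boldsymbol\lambda(\mathbf u)\mathbf u:\mathbf u\in A\times B\}\in K$ for every map $\boldsymbol\lambda:A\times B\to\mathbb{R}^{2,+}$; (K4) $A\cup Q\in K$ for all $Q\in\mathscr{Q}$. For $K\subseteq\mathscr{Q}$, the choice function $C_K$ is defined by $C_K(A)=\{u\in A:(A-u)\setminus\{0\}\notin K\}$ for all $A\in\mathscr{Q}$. *)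

From HB Require Import structures.
From mathcomp Require Import all_boot all_order all_algebra.
From mathcomp Require Import all_classical all_reals.
Set Implicit Arguments. Unset Strict Implicit. Unset Printing Implicit Defensive.
Import Order.TTheory GRing.Theory Num.Theory.
Local Open Scope ring_scope.
Local Open Scope classical_set_scope.

Section Defs.
Variables (X : Type) (R : realType).

Definition opt := X -> R.
Definition opt0 : opt := fun _ => 0.
Definition opt_sub (v u : opt) : opt := fun x => v x - u x.
Definition opt_le (u v : opt) : Prop := forall x, u x <= v x.
Definition opt_lt (u v : opt) : Prop := opt_le u v /\ u <> v.
Definition opt_pos (u : opt) : Prop := opt_lt opt0 u.

Definition isQ (A : set opt) : Prop := finite_set A.

Definition shift (A : set opt) (u : opt) : set opt := [set opt_sub v u | v in A].

Definition R2plus (l : R * R) : Prop := 0 <= l.1 /\ 0 <= l.2 /\ 0 < l.1 + l.2.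

Definition posi (A B : set opt) (lam : opt * opt -> R * R) : set opt :=
  [set (fun x => (lam (u, v)).1 * u x + (lam (u, v)).2 * v x) | u in A & v in B].

Definition is_choice_function (C : set opt -> set opt) : Prop :=
  forall A, isQ A -> C A `<=` A.
Definition rejection (C : set opt -> set opt) (A : set opt) : set opt := A `\` C A.
Definition K_of (C : set opt -> set opt) : set (set opt) :=
  [set A | isQ A /\ ~ C (A `|` [set opt0]) opt0].

Definition coherent_choice (C : set opt -> set opt) : Prop :=
  [/\ forall A, isQ A -> A !=set0 -> C A !=set0,
      forall A u, isQ A -> A u -> (C A u <-> C (shift A u) opt0),
      (forall u, opt_pos u -> K_of C [set u]),
      forall A B, K_of C A -> K_of C B ->
                 forall lam : opt * opt -> R * R,
                   (forall u v, A u -> B v -> R2plus (lam (u, v))) ->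
                   K_of C (posi A B lam)
    & forall A B, isQ A -> isQ B -> A `<=` B ->
                 rejection C A `<=` rejection C B].

Definition coherent_SDOS (K : set (set opt)) : Prop :=
  (forall A, K A -> isQ A) /\
  [/\ forall A, K A -> K (A `\ opt0),
      (~ K [set opt0]),
      (forall u, opt_pos u -> K [set u]),
      forall A B, K A -> K B ->
                 forall lam : opt * opt -> R * R,
                   (forall u v, A u -> B v -> R2plus (lam (u, v))) ->
                   K (posi A B lam)
    & forall A Q, K A -> isQ Q -> K (A `|` Q)].

Definition C_of (K : set (set opt)) (A : set opt) : set opt :=
  [set u | A u /\ ~ K (shift A u `\ opt0)].

End Defs.

From mathcomp Require Import all_boot all_order all_algebra.
From mathcomp Require Import all_classical all_reals.
From mathcomp Require Import finmap lra.
Set Implicit Arguments. Unset Strict Implicit. Unset Printing Implicit Defensive.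
Import Order.TTheory GRing.Theory Num.Theory.
Local Open Scope ring_scope.
Local Open Scope classical_set_scope.

(* The key observation is that C_K rejects 0 from A ∪ {0} exactly when A \ {0} ∈ K,
   so K_{C_K} = { A ∈ Q : A \ {0} ∈ K } (lemma [K_of_C_ofE]).  With this
   description the axioms C1-C4 follow directly from K0-K4, using that K is
   upward closed within Q (a consequence of K4, lemma [K_mono]).

   The only substantial axiom is C0: every nonempty finite option set has a
   chosen element.  For a
   singleton {a}, the set ({a} - a) \ {0} is empty, and the empty set is not
   in K (K1 with K4).  For the step A ∪ {a} with u ∈ C_K(A), if every element
   of A ∪ {a} were rejected then combining ((A ∪ {a}) - u) \ {0} and
   ((A ∪ {a}) - a) \ {0} through K3 (adding a - u to each v - a, which gives
   v - u) yields a member of K contained in A - u, whence (A - u) \ {0} ∈ K,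
   contradicting u ∈ C_K(A) (lemma [C_of_extend]). *)

Section OptionSets.
Variables (X : Type) (R : realType).
Implicit Types (A B : set (opt X R)) (u v : opt X R).

Lemma shift0 A : shift A (opt0 R) = A.
Proof.
have sub0 v : opt_sub v (opt0 R) = v.
  by apply: funext => t; rewrite /opt_sub /opt0 subr0.
apply/seteqP; split => [_ [v Av <-]|v Av]; first by rewrite sub0.
by exists v; rewrite ?sub0.
Qed.

Lemma opt_subvv u : opt_sub u u = opt0 R.
Proof. by apply: funext => t; rewrite /opt_sub /opt0 subrr. Qed.

Lemma isQ_shift A u : isQ A -> isQ (shift A u).
Proof. exact: finite_image. Qed.

Lemma setU0D A : (A `|` [set opt0 R]) `\ opt0 R = A `\ opt0 R.
Proof.
apply/seteqP; split => [z [[Az|->] nz]|z [Az nz]]; first by split.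
  by case: nz.
by split => //; left.
Qed.

End OptionSets.

Section CoherentSDOS.
Variables (X : Type) (R : realType) (K : set (set (opt X R))).
Hypothesis cK : coherent_SDOS K.
Implicit Types (A B : set (opt X R)) (u v : opt X R).

Lemma K_mono A B : K A -> isQ B -> A `<=` B -> K B.
Proof.
have [_ [_ _ _ _ K4]] := cK; move=> KA fB AB.
by rewrite -(setUidr AB); apply: K4.
Qed.

Lemma K_not_set0 : ~ K set0.
Proof.
have [_ [_ K1 _ _ _]] := cK; move=> K0; apply: K1.
exact: K_mono K0 (finite_set1 _) (sub0set _).
Qed.

Lemma K_of_C_ofE A : K_of (C_of K) A <-> isQ A /\ K (A `\ opt0 R).
Proof.
rewrite /K_of /C_of /= shift0 setU0D; split => -[fA H]; split => //.
  by apply: contrapT => nK; apply: H; split => //; right.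
by case.
Qed.

Lemma C_of_extend A a u :
  isQ A -> C_of K A u -> C_of K (A `|` [set a]) !=set0.
Proof.
move=> fA [Au nKu].
have [a_in|a_notin] := pselect (A a).
  by exists u; rewrite setUidl //= => _ ->.
have [_ [K0 _ _ K3 _]] := cK.
set Aa := A `|` [set a].
apply: contrapT => noChoice.
have rejected w : Aa w -> K (shift Aa w `\ opt0 R).
  by move=> Aw; apply: contrapT => nKw; apply: noChoice; exists w.
(* pair the option a - u of Aa - u with each v - a of Aa - a, giving v - u;
   every other option w - u of Aa - u is kept unchanged *)
pose lam (p : opt X R * opt X R) : R * R :=
  if pselect (p.1 = opt_sub a u) then (1, 1) else (1, 0).
have lamP x y : R2plus (lam (x, y)).
  by rewrite /lam /R2plus /=; case: pselect => _ /=; lra.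
have Kcomb := K3 _ _ (rejected u (or_introl Au)) (rejected a (or_intror erefl))
  lam (fun x y _ _ => lamP x y).
have comb_sub : posi (shift Aa u `\ opt0 R) (shift Aa a `\ opt0 R) lam
                  `<=` shift A u.
  move=> _ [_ [[w Aw <-] _] [_ [[v Av <-] vn0] <-]].
  have Av' : A v by case: Av => // va; case: vn0; rewrite va opt_subvv.
  rewrite /lam /=; case: pselect => [wa|wna] /=.
    exists v => //; apply: funext => t; rewrite /opt_sub !mul1r.
    by have := congr1 (fun f => f t) wa; rewrite /opt_sub => ->; lra.
  have Aw' : A w by case: Aw => // wa; case: wna; rewrite wa.
  by exists w => //; apply: funext => t; rewrite mul1r mul0r addr0.
exact/nKu/K0/(K_mono Kcomb (isQ_shift _ fA) comb_sub).
Qed.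

Lemma C_of_nonempty A : isQ A -> A !=set0 -> C_of K A !=set0.
Proof.
move=> /(@finite_fsetP {classic (opt X R)})[S ->].
elim/fset1U_rect: S => [|a S _ IH]; first by rewrite set_fset0 => -[].
rewrite set_fsetU1 setUC => _.
have [S0|/set0P/IH [u Cu]] := eqVneq [set` S] set0; last first.
  exact: C_of_extend (finite_fset S) Cu.
rewrite S0 set0U; exists a; split => //.
suff -> : shift [set a] a `\ opt0 R = set0 by exact: K_not_set0.
by apply/seteqP; split => [z [[v /= -> <-]]|//]; rewrite opt_subvv.
Qed.

Lemma C_of_shift A u : A u -> (C_of K A u <-> C_of K (shift A u) (opt0 R)).
Proof.
move=> Au; rewrite /C_of /= shift0.
by split => -[_ nK]; split => //; exists u; rewrite ?opt_subvv.
Qed.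

Lemma C_of_pos u : opt_pos u -> K_of (C_of K) [set u].
Proof.
have [_ [_ _ K2 _ _]] := cK; move=> pu; apply/K_of_C_ofE.
split; first exact: finite_set1.
suff -> : [set u] `\ opt0 R = [set u] by exact: K2.
have [_ u_neq0] := pu.
by apply/seteqP; split => [z []//|z ->]; split => // /esym /u_neq0.
Qed.

Lemma C_of_posi A B lam : K_of (C_of K) A -> K_of (C_of K) B ->
  (forall u v, A u -> B v -> R2plus (lam (u, v))) ->
  K_of (C_of K) (posi A B lam).
Proof.
have [_ [K0 _ _ K3 _]] := cK.
move=> /K_of_C_ofE [fA KA] /K_of_C_ofE [fB KB] lamP; apply/K_of_C_ofE.
have fP : isQ (posi A B lam) by apply: finite_image2.
have Knz : K (posi (A `\ opt0 R) (B `\ opt0 R) lam).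
  by apply: K3 => // x y [Ax _] [By _]; apply: lamP.
split => //; apply/K0/(K_mono Knz fP).
by move=> z [x [Ax _] [y [By _] <-]]; exists x => //; exists y.
Qed.

Lemma C_of_rejection_mono A B : isQ B -> A `<=` B ->
  rejection (C_of K) A `<=` rejection (C_of K) B.
Proof.
move=> fB AB u [Au nCA]; split; first exact: AB.
have KA : K (shift A u `\ opt0 R) by apply: contrapT => nK; apply: nCA.
have sub : shift A u `\ opt0 R `<=` shift B u `\ opt0 R.
  by move=> z [[v Av <-] nz]; split => //; exists v => //; apply: AB.
by case=> _; apply; apply: K_mono KA (finite_setD _ (isQ_shift _ fB)) sub.
Qed.

End CoherentSDOS.

Theorem proposition1 (X : Type) (x0 : X) (R : realType)
  (K : set (set (opt X R))) :
  coherent_SDOS K ->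
  is_choice_function (C_of K) /\ coherent_choice (C_of K).
Proof.
move=> cK; split; first by move=> A _ u [].
split.
- exact: C_of_nonempty.
- by move=> A u _; apply: C_of_shift.
- exact: C_of_pos.
- by move=> A B KA KB lam; apply: C_of_posi.
- by move=> A B _ fB; apply: C_of_rejection_mono.
Qed.
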